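(* There exist solutions $u\in C(G^h)$ of $F^{W,h}[u](x)=0$ for all $x\in G^h$, and they are fixed points of the map $T:C(G^h)\to C(G^h)$ given by $$T(u)(x)=\min_{v\in\mathcal{D}^W}\min\Big(g(x),\ \frac{u(x+hv)+u(x-hv)}{2}\Big)\ \ (x\in G^h_V),\qquad T(u)(x)=g(x)\ \ (x\in\partial G^h).$$
   Context: Let $\Omega\subset D=[-1,1]^n$, $h>0$, $g\in C(G^h)$. Grid: $G^h=\{x\in h\mathbb{Z}^n: x\in D\}$, $G^h_V=\Omega\cap G^h$, $\partial G^h=G^h\setminus G^h_V$; $C(G^h)$ is the set of functions $G^h\to\mathbb{R}$. A grid direction set $\mathcal{D}^W$ is a finite set of nonzero vectors of $\mathbb{Z}^n$ spanning $\mathbb{R}^n$ and closed under $v\mapsto-v$; $h$ is assumed small enough that $x\pm hv\in G^h$ for all $x\in G^h_V$, $v\in\mathcal{D}^W$. For $v\in\mathcal{D}^W$, $D^h_{vv}u(x)=\frac{u(x+hv)-2u(x)+u(x-hv)}{h^2\|v\|^2}$ ($x\in G^h_V$), $\lambda^h_{\mathcal{D}^W}[u](x)=\min_{v\in\mathcal{D}^W}D^h_{vv}u(x)$, and $F^{W,h}[u](x)=\max\{u(x)-g(x),-\lambda^h_{\mathcal{D}^W}[u](x)\}$ for $x\in G^h_V$, $F^{W,h}[u](x)=u(x)-g(x)$ for $x\in\partial G^h$. *)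

From HB Require Import structures.
From mathcomp Require Import all_boot all_order all_algebra.
From mathcomp Require Import boolp classical_sets reals.
Set Implicit Arguments. Unset Strict Implicit. Unset Printing Implicit Defensive.
Import Order.TTheory GRing.Theory Num.Theory.
Local Open Scope ring_scope.
Local Open Scope classical_set_scope.

Section Grid.
Variables (R : realType) (n : nat) (h : R).

Definition gpt (k : 'rV[int]_n) : 'rV[R]_n := map_mx (fun z : int => h * z%:~R) k.

Definition inD (x : 'rV[R]_n) : Prop := forall i : 'I_n, `|x 0 i| <= 1.

(* k indexes a point of G^h = h Z^n ∩ D *)
Definition inG (k : 'rV[int]_n) : Prop := inD (gpt k).

(* k indexes a point of G^h_V = Ω ∩ G^h *)
Definition inGV (Om : set 'rV[R]_n) (k : 'rV[int]_n) : bool :=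
  (gpt k \in Om) && `[< inG k >].

Definition normsq (v : 'rV[int]_n) : R := \sum_(i < n) ((v 0 i)%:~R) ^+ 2.

(* minimum of a finite (nonempty) list of reals; the empty case never occurs below *)
Definition seqmin (s : seq R) : R :=
  match s with [::] => 0 | a :: s' => foldr Num.min a s' end.

Definition grid_direction_set (W : seq 'rV[int]_n) : Prop :=
  (forall v, v \in W -> v != 0) /\
  (forall v, v \in W -> - v \in W) /\
  (span (map (map_mx (fun z : int => (z%:~R : R))) W) = fullv)%VS.

(* second difference D^h_{vv} u(x) at x = h k *)
Definition Dvv (u : 'rV[int]_n -> R) (k v : 'rV[int]_n) : R :=
  (u (k + v) - 2 * u k + u (k - v)) / (h ^+ 2 * normsq v).

Definition lambda_h (W : seq 'rV[int]_n) (u : 'rV[int]_n -> R) (k : 'rV[int]_n) : R :=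
  seqmin [seq Dvv u k v | v <- W].

Definition FWh (Om : set 'rV[R]_n) (W : seq 'rV[int]_n) (g u : 'rV[int]_n -> R)
  (k : 'rV[int]_n) : R :=
  if inGV Om k then Num.max (u k - g k) (- lambda_h W u k) else u k - g k.

Definition Tmap (Om : set 'rV[R]_n) (W : seq 'rV[int]_n) (g u : 'rV[int]_n -> R)
  (k : 'rV[int]_n) : R :=
  if inGV Om k then seqmin [seq Num.min (g k) ((u (k + v) + u (k - v)) / 2) | v <- W]
  else g k.

End Grid.

(** The scheme is monotone: [Tmap u k] is nondecreasing in the neighbouring
    values of [u] and never exceeds [g k].  Hence Perron's method applies: the
    pointwise supremum of all subsolutions is again a subsolution, and raising
    it at a single point to its [Tmap]-value keeps it a subsolution, so it is
    a fixed point of [Tmap].  The grid is finite, so [g] is bounded below and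
    constant subsolutions exist.  Finally, [FWh u k = 0] is equivalent to
    [Tmap u k = u k]: both say [u k = min (g k, min_v (u (k+v) + u (k-v)) / 2)],
    because each second difference [Dvv u k v] has the sign of the mean minus
    [u k]. *)
From HB Require Import structures.
From mathcomp Require Import all_boot all_order all_algebra.
From mathcomp Require Import boolp classical_sets reals.
From mathcomp Require Import lra zify.
Set Implicit Arguments. Unset Strict Implicit. Unset Printing Implicit Defensive.
Import Order.TTheory GRing.Theory Num.Theory.
Local Open Scope ring_scope.
Local Open Scope classical_set_scope.

Section SeqMin.
Variable R : realType.

Lemma le_seqmin (s : seq R) c :
  s != [::] -> (c <= seqmin s) = all (fun x => c <= x) s.
Proof.
case: s => [//|a s] _ /=.
by elim: s => [|b s IH] /=; rewrite ?andbT // le_min IH andbCA.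
Qed.

Lemma seqmin_leE (s : seq R) c :
  s != [::] -> (seqmin s <= c) = has (fun x => x <= c) s.
Proof.
case: s => [//|a s] _ /=.
by elim: s => [|b s IH] /=; rewrite ?orbF // ge_min IH orbCA.
Qed.

Lemma seqmin_le (s : seq R) x : x \in s -> seqmin s <= x.
Proof.
move=> xs; rewrite seqmin_leE; last by case: s xs.
by apply/hasP; exists x.
Qed.

Lemma seqmin_map_min (T : eqType) (s : seq T) (c : R) (f : T -> R) :
  s != [::] ->
  seqmin [seq Num.min c (f x) | x <- s] = Num.min c (seqmin [seq f x | x <- s]).
Proof.
case: s => [//|a s] _ /=.
by elim: s => [|b s IH] //=; rewrite IH minACA minxx.
Qed.

End SeqMin.

Lemma minr_eqE (R : realDomainType) (a b x : R) :
  (Num.min a b == x) = [&& x <= a, x <= b & (a <= x) || (b <= x)].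
Proof. by rewrite eq_le ge_min le_min andbC -andbA. Qed.

Lemma maxr_eq0E (R : realDomainType) (a b : R) :
  (Num.max a b == 0) = [&& a <= 0, b <= 0 & (0 <= a) || (0 <= b)].
Proof. by rewrite eq_le ge_max le_max -andbA. Qed.

Lemma normsq_gt0 (R : realType) n (v : 'rV[int]_n) : v != 0 -> 0 < normsq R v.
Proof.
move=> v_neq0; have [i vi_neq0] : exists i, v 0 i != 0.
  apply/existsP; apply: contraR v_neq0 => /existsPn vi_eq0.
  by apply/eqP/rowP => i; rewrite mxE; apply/eqP; rewrite -[_ == _]negbK.
rewrite /normsq (bigD1 i) //= ltr_pwDl ?sumr_ge0 // => [|j _].
  by rewrite lt_def sqrf_eq0 intr_eq0 vi_neq0 sqr_ge0.
exact: sqr_ge0.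
Qed.

Lemma grid_direction_set_neq_nil (R : realType) n (W : seq 'rV[int]_n) :
  (0 < n)%N -> grid_direction_set R W -> W != [::].
Proof.
move=> n_gt0 [_ [_ spanW]]; apply/eqP => W_nil; move: spanW.
rewrite W_nil /= span_nil => /(congr1 (fun U => \dim U)).
by rewrite dimv0 dimvf /dim /= mul1n => n_eq0; rewrite -n_eq0 in n_gt0.
Qed.

Section Scheme.
Variables (R : realType) (n : nat) (h : R) (Om : set 'rV[R]_n).
Variables (g : 'rV[int]_n -> R) (W : seq 'rV[int]_n).
Hypothesis h_gt0 : 0 < h.
Hypothesis W_neq_nil : W != [::].
Hypothesis W_neq0 : forall v, v \in W -> v != 0.

Definition nbr_mean (u : 'rV[int]_n -> R) k v := (u (k + v) + u (k - v)) / 2.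

Definition nbr_min (u : 'rV[int]_n -> R) k := seqmin [seq nbr_mean u k v | v <- W].

Lemma Dvv_denom_gt0 v : v \in W -> 0 < h ^+ 2 * normsq R v.
Proof. by move=> /W_neq0 /(normsq_gt0 R); apply: mulr_gt0; rewrite exprn_gt0. Qed.

Lemma map_W_neq_nil (T : eqType) (f : 'rV[int]_n -> T) : [seq f v | v <- W] != [::].
Proof. by case: W W_neq_nil. Qed.

Lemma Dvv_ge0E u k v : v \in W -> (0 <= Dvv h u k v) = (u k <= nbr_mean u k v).
Proof.
move=> /Dvv_denom_gt0 den_gt0.
rewrite /Dvv /nbr_mean ler_pdivlMr // mul0r ler_pdivlMr //.
by apply/idP/idP; lra.
Qed.

Lemma Dvv_le0E u k v : v \in W -> (Dvv h u k v <= 0) = (nbr_mean u k v <= u k).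
Proof.
move=> /Dvv_denom_gt0 den_gt0.
rewrite /Dvv /nbr_mean ler_pdivrMr // mul0r ler_pdivrMr //.
by apply/idP/idP; lra.
Qed.

Lemma lambda_h_ge0E u k : (0 <= lambda_h h W u k) = (u k <= nbr_min u k).
Proof.
rewrite /lambda_h /nbr_min !le_seqmin ?map_W_neq_nil // !all_map.
by apply: eq_in_all => v vW /=; rewrite Dvv_ge0E.
Qed.

Lemma lambda_h_le0E u k : (lambda_h h W u k <= 0) = (nbr_min u k <= u k).
Proof.
rewrite /lambda_h /nbr_min !seqmin_leE ?map_W_neq_nil // !has_map.
by apply: eq_in_has => v vW /=; rewrite Dvv_le0E.
Qed.

Lemma Tmap_interior u k :
  inGV h Om k -> Tmap h Om W g u k = Num.min (g k) (nbr_min u k).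
Proof. by move=> kV; rewrite /Tmap kV seqmin_map_min. Qed.

Lemma FWh_eq0E u k : (FWh h Om W g u k == 0) = (Tmap h Om W g u k == u k).
Proof.
rewrite /FWh; case: ifP => kV; last by rewrite /Tmap kV subr_eq0 eq_sym.
rewrite Tmap_interior // maxr_eq0E minr_eqE.
by rewrite oppr_le0 oppr_ge0 lambda_h_ge0E lambda_h_le0E subr_le0 subr_ge0.
Qed.

Definition subsolution (u : 'rV[int]_n -> R) : Prop :=
  (forall k, inG h k -> u k <= g k) /\
  (forall k, inGV h Om k -> forall v, v \in W -> u k <= nbr_mean u k v).

Lemma Tmap_le_g u k : Tmap h Om W g u k <= g k.
Proof.
case: (boolP (inGV h Om k)) => kV; last by rewrite /Tmap (negbTE kV).
by rewrite Tmap_interior // ge_min lexx.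
Qed.

Lemma Tmap_le_nbr_mean u k v :
  inGV h Om k -> v \in W -> Tmap h Om W g u k <= nbr_mean u k v.
Proof.
move=> kV vW; rewrite Tmap_interior // ge_min; apply/orP; right.
by apply: seqmin_le; apply: map_f.
Qed.

Lemma subsolution_le_Tmap u k :
  subsolution u -> inG h k -> u k <= Tmap h Om W g u k.
Proof.
move=> [u_le_g u_le_mean] kG; case: (boolP (inGV h Om k)) => kV; last first.
  by rewrite /Tmap (negbTE kV) u_le_g.
rewrite Tmap_interior // le_min u_le_g //= le_seqmin ?map_W_neq_nil //.
by rewrite all_map; apply/allP => v vW /=; apply: u_le_mean.
Qed.

Lemma subsolution_update u k m :
  subsolution u -> inG h k -> u k <= m -> m <= g k ->
  (inGV h Om k -> forall v, v \in W -> m <= nbr_mean u k v) ->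
  subsolution (fun j => if j == k then m else u j).
Proof.
move=> [u_le_g u_le_mean] kG um mg m_le_mean; split=> [j jG|j jV v vW].
  by case: eqP => [->|_]; last exact: u_le_g.
have u_le i : u i <= if i == k then m else u i by case: eqP => [->|].
case: (eqVneq j k) jV => [-> kV|_ jV]; last first.
  have := u_le_mean j jV v vW; rewrite /nbr_mean.
  by have := u_le (j + v); have := u_le (j - v); lra.
have kDv : k + v != k by rewrite -subr_eq0 addrAC subrr add0r W_neq0.
have kBv : k - v != k by rewrite -subr_eq0 addrAC subrr sub0r oppr_eq0 W_neq0.
by rewrite /nbr_mean (negbTE kDv) (negbTE kBv); apply: m_le_mean.
Qed.

Section Perron.
Hypothesis W_closed : forall k, inGV h Om k -> forall v, v \in W ->
  inG h (k + v) /\ inG h (k - v).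
Hypothesis subsolution_exists : exists w, subsolution w.

Definition perron k := sup [set w k | w in subsolution].

Lemma subsolution_values_neq0 k : [set w k | w in subsolution] !=set0.
Proof. by have [w w_sub] := subsolution_exists; exists (w k), w. Qed.

Lemma perron_ge w k : subsolution w -> inG h k -> w k <= perron k.
Proof.
move=> w_sub kG; apply: sup_upper_bound; last by exists w.
split; first by exists (w k), w.
by exists (g k) => _ [w' [w'_le_g _] <-]; apply: w'_le_g.
Qed.

Lemma perron_le_g k : inG h k -> perron k <= g k.
Proof.
move=> kG; apply: ge_sup; first exact: subsolution_values_neq0.
by move=> _ [w [w_le_g _] <-]; apply: w_le_g.
Qed.

Lemma perron_subsolution : subsolution perron.
Proof.
split=> [|k kV v vW]; first exact: perron_le_g.
have [kDvG kBvG] := W_closed kV vW.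
suff : perron k <= nbr_mean perron k v by [].
apply: ge_sup; first exact: subsolution_values_neq0.
move=> _ [w w_sub <-]; have := w_sub.2 k kV v vW; rewrite /nbr_mean.
by have := perron_ge w_sub kDvG; have := perron_ge w_sub kBvG; lra.
Qed.

Lemma Tmap_perron k : inG h k -> Tmap h Om W g perron k = perron k.
Proof.
move=> kG; have perron_sub := perron_subsolution.
apply/le_anti; rewrite subsolution_le_Tmap // andbT.
have raised_sub := subsolution_update perron_sub kG
  (subsolution_le_Tmap perron_sub kG) (Tmap_le_g perron k)
  (fun kV _ => Tmap_le_nbr_mean perron kV).
by have := perron_ge raised_sub kG; rewrite eqxx.
Qed.

End Perron.
End Scheme.

Lemma int_box_lower_bound (R : realType) n (N : nat) (f : 'rV[int]_n -> R) :
  exists c, forall k : 'rV[int]_n, (forall i, `|k 0 i| <= N%:Z) -> c <= f k.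
Proof.
pose shift (b : 'rV['I_(N.*2).+1]_n) := map_mx (fun j : 'I__ => j%:Z - N%:Z : int) b.
exists (\big[Num.min/0]_b f (shift b)) => k k_bnd.
have -> : k = shift (map_mx (fun z : int => inord (absz (z + N%:Z))) k).
  by apply/rowP => i; rewrite !mxE inordK; have := k_bnd i; lia.
exact: bigmin_le.
Qed.

Lemma grid_coord_bound (R : realType) n (h : R) : 0 < h ->
  exists N : nat, forall k : 'rV[int]_n, inG h k -> forall i, `|k 0 i| <= N%:Z.
Proof.
move=> h_gt0; exists (Num.truncn h^-1) => k kG i.
rewrite -abszE lez_nat truncn_ge_nat ?invr_ge0 ?(ltW h_gt0) //.
rewrite natr_absz intr_norm -[h^-1]mulr1 ler_pdivlMl //.
by have := kG i; rewrite /gpt mxE normrM (gtr0_norm h_gt0).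
Qed.

Lemma grid_lower_bound (R : realType) n (h : R) (f : 'rV[int]_n -> R) :
  0 < h -> exists c, forall k, inG h k -> c <= f k.
Proof.
move=> /(grid_coord_bound n) [N k_bnd]; have [c c_le_f] := int_box_lower_bound N f.
by exists c => k /k_bnd; apply: c_le_f.
Qed.

Theorem mainTheorem9 (R : realType) (n : nat) (h : R) (Om : set 'rV[R]_n)
  (g : 'rV[int]_n -> R) (W : seq 'rV[int]_n) :
  (0 < n)%N -> 0 < h ->
  Om `<=` inD (n:=n) ->
  grid_direction_set R W ->
  (forall k, inGV h Om k -> forall v, v \in W ->
      inG h (k + v) /\ inG h (k - v)) ->
  (exists u : 'rV[int]_n -> R, forall k, inG h k -> FWh h Om W g u k = 0) /\
  (forall u : 'rV[int]_n -> R, (forall k, inG h k -> FWh h Om W g u k = 0) ->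
      forall k, inG h k -> Tmap h Om W g u k = u k).
Proof.
move=> n_gt0 h_gt0 _ gW W_closed.
have W_neq_nil := grid_direction_set_neq_nil n_gt0 gW.
have W_neq0 : forall v, v \in W -> v != 0 by case: gW.
have [c c_le_g] := grid_lower_bound g h_gt0.
have sub_exists : exists w, subsolution h Om g W w.
  by exists (fun=> c); split=> // k _ v _; rewrite /nbr_mean; lra.
split=> [|u u_sol k kG].
  exists (perron h Om g W) => k kG; apply/eqP.
  by rewrite FWh_eq0E //; apply/eqP/Tmap_perron.
by apply/eqP; rewrite -FWh_eq0E //; apply/eqP/u_sol.
Qed.
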